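(* Let $n\ge 6$ be even, and let $r=(s_1,\dots,s_n)$ be a Latin row of length $n$ such that $\mathrm{dist}(s_j,s_{j+1})\ge \frac n2-1$ for all $1\le j\le n-1$ and $\mathrm{dist}(s_n,s_1)\ge\frac n2-1$. Let $d_*=(\epsilon_1,\dots,\epsilon_{n-1},h)$ be its extended difference row. Then $d_*$ is a rotation of \[(\underbrace{1,\dots,1}_{\frac n2-1},0,\underbrace{-1,\dots,-1}_{\frac n2-1},0),\] or $d_*=\pm(1,1,\dots,1)$. Moreover, the number of such rows $r$ with $s_1=1$ is $n+2$ if $n\equiv 0\pmod 4$ and $n$ if $n\equiv 2\pmod 4$.
   Context: Symbols are $[1,n]$. For $a,b\in[1,n]$, $\mathrm{dist}(a,b)$ is the minimum of the residues of $a-b$ and $b-a$ modulo $n$ (in $[0,n-1]$). A Latin row of length $n$ is a permutation $(s_1,\dots,s_n)$ of $[1,n]$. Its extended difference row is $d_*=(\epsilon_1,\dots,\epsilon_{n-1},h)$ where, with $h_j\in[0,n-1]$, $h_j\equiv s_{j+1}-s_j\pmod n$ for $1\le j\le n-1$ and $h_n\equiv s_1-s_n\pmod n$, one sets $\epsilon_j=h_j-\frac n2$ and $h=h_n-\frac n2$ (integers, not reduced mod $n$). Writing $\epsilon_n=h$, the rotation by 1 of $d_*$ is $(\epsilon_n,\epsilon_1,\dots,\epsilon_{n-1})$; the rotations of $d_*$ are the results of applying this cyclic shift $1,2,\dots,n$ times. *)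

From mathcomp Require Import all_boot all_order all_algebra.
Set Implicit Arguments. Unset Strict Implicit. Unset Printing Implicit Defensive.
Import Order.TTheory GRing.Theory Num.Theory.

Definition latin_row (n : nat) (s : seq nat) : bool := perm_eq s (iota 1 n).

Definition resid (n a b : nat) : nat := (a + n - b) %% n.

Definition dist (n a b : nat) : nat := minn (resid n a b) (resid n b a).

Definition sj (s : seq nat) (j : nat) : nat := nth 0 s j.-1.

Definition csucc (n j : nat) : nat := if j == n then 1 else j.+1.

Definition hj (n : nat) (s : seq nat) (j : nat) : nat :=
  resid n (sj s (csucc n j)) (sj s j).

(* extended difference row d_* = (eps_1, ..., eps_{n-1}, h), eps_j = h_j - n/2 *)
Definition ext_diff_row (n : nat) (s : seq nat) : seq int :=
  [seq (Posz (hj n s j) - Posz (n %/ 2))%R | j <- iota 1 n].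

Definition far_row (n : nat) (s : seq nat) : bool :=
  [forall j : 'I_n, (n %/ 2 - 1 <= dist n (sj s j.+1) (sj s (csucc n j.+1)))%N].

(* rotation by one: (e_n, e_1, ..., e_{n-1}) = rotr 1; rotation by k = rotr k *)
Definition is_rotation_of (d p : seq int) : Prop :=
  exists k : nat, (1 <= k <= size p)%N /\ d = rotr k p.

Definition pattern (n : nat) : seq int :=
  nseq (n %/ 2 - 1) 1%R ++ [:: 0%R] ++ nseq (n %/ 2 - 1) (-1)%R ++ [:: 0%R].

From mathcomp Require Import all_boot all_order all_algebra.
From mathcomp Require Import zify.
Import Order.TTheory GRing.Theory Num.Theory.
Set Implicit Arguments. Unset Strict Implicit. Unset Printing Implicit Defensive.

(* Write n = 2m, let h_t in [0, n) be the cyclic difference s_(t+1) - s_t mod n and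
   e_t = h_t - m, the entries of d_*. The distance condition says exactly that every e_t is
   -1, 0 or 1, and the row is Latin iff no window of 0 < L < n consecutive h_t sums to 0 mod n
   while the whole period does. Since L m is 0 or m mod n according to the parity of L and a
   window of e has norm at most L, this means: even windows of e do not sum to 0, odd ones not
   to m or -m, and the period sums to 0, n or -n.
   A period sum of n or -n forces e to be constant, which the window of length m allows iff m
   is even. If the period sums to 0, the prefix sums of e at 0, 2, ..., 2(m - 1) are pairwise
   distinct but differ by at most half of the mass sum |e_t|, so at least n - 2 of the e_t are
   nonzero. As two adjacent steps never cancel, a period then holds exactly two zeros, separated
   by runs of equal signs; the period sum forces the runs to have opposite signs and length
   m - 1: a rotation of the pattern.
   Conversely all these sequences pass the test, and a row with s_1 = 1 is determined by its
   steps, so there are n such rows, plus 2 when m is even. *)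

Lemma modn_wrap x n : n <= x < n + n -> x %% n = x - n.
Proof. by case/andP=> hnx hx; rewrite -{1}(subnK hnx) modnDr modn_small //; lia. Qed.

Lemma nth_rotr (T : Type) (x0 : T) (s : seq T) k i : k <= size s -> i < size s ->
  nth x0 (rotr k s) i = nth x0 s ((i + (size s - k)) %% size s).
Proof.
move=> hk hi; rewrite /rotr /rot nth_cat size_drop.
case: ltnP => h.
  by rewrite nth_drop modn_small; [congr nth; lia | lia].
by rewrite nth_take ?modn_wrap; [congr nth | |]; lia.
Qed.

Lemma eq_in_mkseq (T : Type) (f g : nat -> T) k :
  (forall t, t < k -> f t = g t) -> mkseq f k = mkseq g k.
Proof. by move=> fg; apply/eq_in_map => t; rewrite mem_iota => /andP [_ ht]; apply: fg. Qed.

Lemma mkseq_const (T : Type) (x : T) k : mkseq (fun=> x) k = nseq k x.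
Proof.
apply: (@eq_from_nth _ x); rewrite size_mkseq ?size_nseq // => t ht.
by rewrite nth_mkseq ?nth_nseq ?ht.
Qed.

Section IntArith.
Local Open Scope ring_scope.

Lemma window_modn_eq0 (n m L H : nat) (w : int) :
  n = (m + m)%N -> (0 < L < n)%N -> H%:Z = (L * m)%N%:Z + w -> `|w| <= L%:Z ->
  ((H %% n == 0)%N = if odd L then `|w| == m%:Z else w == 0).
Proof.
move=> hn hL hH hw; have hn0 : (0 < n)%N by lia.
have [l hl] : exists l, L = (l.*2 + odd L)%N.
  by exists L./2; rewrite -{1}(odd_double_half L) addnC.
apply/idP/idP.
  move=> /eqP hr.
  have [q hq] : exists q, H = (q * n)%N.
    by exists (H %/ n)%N; rewrite [LHS](divn_eq H n) hr addn0.
  have hlq : (l < q.+1)%N by rewrite -(ltn_pmul2r hn0); lia.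
  have hql : (q < l + 2)%N by rewrite -(ltn_pmul2r hn0); lia.
  have : (q = l \/ q = l.+1)%N by lia.
  by case=> eq_q; rewrite eq_q in hq; case: (odd L) hl => /= hl; apply/eqP; lia.
move=> hw0; have [k hk] : exists k, H = (k * n)%N.
  case: (odd L) hl hw0 => /= hl /eqP hw0; last by exists l; lia.
  have [hwm | hwm] : w = m%:Z \/ w = - m%:Z by lia.
    by exists l.+1; lia.
  by exists l; lia.
by rewrite hk modnMl.
Qed.

Lemma period_modn_eq0 (n m H : nat) (w : int) : (0 < n)%N ->
  H%:Z = (n * m)%N%:Z + w -> `|w| <= n%:Z ->
  ((H %% n == 0)%N = (w == 0) || (`|w| == n%:Z)).
Proof.
move=> hn0 hH hw; apply/idP/idP.
  move=> /eqP hr.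
  have [q hq] : exists q, H = (q * n)%N.
    by exists (H %/ n)%N; rewrite [LHS](divn_eq H n) hr addn0.
  have hlq : (m < q.+2)%N by rewrite -(ltn_pmul2r hn0); lia.
  have hql : (q < m + 2)%N by rewrite -(ltn_pmul2r hn0); lia.
  suff : w = 0 \/ `|w| = n%:Z by case=> ->; rewrite eqxx ?orbT.
  have [eq_q | [eq_q | eq_q]] : (q.+1 = m \/ q = m \/ q = m.+1)%N by lia.
  - by rewrite -eq_q in hH; lia.
  - by rewrite eq_q in hq; lia.
  - by rewrite eq_q in hq; lia.
move=> hw0; have [k hk] : exists k, H = (k * n)%N.
  have [hwm | [hwm | hwm]] : w = 0 \/ w = n%:Z \/ w = - n%:Z by lia.
  - by exists m; lia.
  - by exists m.+1; lia.
  - by case: m hH => [|m'] hH; [lia | exists m'; lia].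
by rewrite hk modnMl.
Qed.

Lemma injective_ord_spread (k : nat) (f : 'I_k.+1 -> int) (N : int) : injective f ->
  (forall i j, 2%:Z * (f j - f i) <= N) -> (2 * k)%N%:Z <= N.
Proof.
move=> f_inj hN.
have [i0 _ i0_min] := arg_minP f (isT : predT ord0).
pose g j := absz (f j - f i0).
have hg j : (g j)%:Z = f j - f i0 by rewrite /g gez0_abs // subr_ge0 i0_min.
have g_uniq : uniq (map g (enum 'I_k.+1)).
  rewrite map_inj_uniq ?enum_uniq // => a b gab.
  by apply: f_inj; have := hg a; have := hg b; rewrite gab; lia.
have g_sub : {subset map g (enum 'I_k.+1) <= iota 0 (absz N %/ 2).+1}.
  move=> _ /mapP [j _ ->]; rewrite mem_iota.
  by have := hN i0 j; have := hg j; lia.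
have N_ge0 := hN i0 i0; rewrite subrr mulr0 in N_ge0.
by have := uniq_leq_size g_uniq g_sub; rewrite size_map size_enum_ord size_iota; lia.
Qed.

End IntArith.

Definition latin_steps (n : nat) (h : nat -> nat) :=
  (forall i L, 0 < L < n -> (\sum_(i <= t < i + L) h t) %% n != 0)
  /\ (\sum_(0 <= t < n) h t) %% n = 0.

Section Windows.
Local Open Scope ring_scope.

Definition wsum (e : nat -> int) i L := \sum_(i <= t < i + L) e t.

Definition ternary (e : nat -> int) := forall t, e t = 0 \/ e t = 1 \/ e t = -1.

Lemma wsum0 e i : wsum e i 0 = 0.
Proof. by rewrite /wsum addn0 big_geq. Qed.

Lemma wsum1 e i : wsum e i 1 = e i.
Proof. by rewrite /wsum addn1 big_nat1. Qed.

Lemma wsumD e i L1 L2 : wsum e i (L1 + L2) = wsum e i L1 + wsum e (i + L1) L2.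
Proof. by rewrite /wsum addnA (@big_cat_nat _ _ _ (i + L1)) //= leq_addr. Qed.

Lemma wsum_cat e i j k : (i <= j <= k)%N ->
  wsum e i (k - i) = wsum e i (j - i) + wsum e j (k - j).
Proof. by case/andP=> hij hjk; rewrite /wsum !subnKC ?(leq_trans hij) // -big_cat_nat. Qed.

Lemma wsumS e i L : wsum e i L.+1 = e i + wsum e i.+1 L.
Proof. by rewrite -add1n wsumD wsum1 addn1. Qed.

Lemma wsum_const (c : int) i L : wsum (fun=> c) i L = c *+ L.
Proof. by rewrite /wsum sumr_const_nat addKn. Qed.

Lemma ternary_norm_le1 e t : ternary e -> `|e t| <= 1.
Proof. by move=> /(_ t) [|[]] ->. Qed.

Lemma wsum_normr_le e i L : ternary e -> wsum (fun t => `|e t|) i L <= L%:Z.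
Proof.
move=> e3; have -> : L%:Z = wsum (fun=> 1) i L by rewrite wsum_const natz.
by apply: ler_sum => t _; apply: ternary_norm_le1.
Qed.

Lemma normr_wsum_le e i L : ternary e -> `|wsum e i L| <= L%:Z.
Proof. by move=> e3; apply: le_trans (ler_norm_sum _ _ _) (wsum_normr_le i L e3). Qed.

Lemma wsum_run e a L sg : e a = 0 -> (forall t, (0 < t <= L)%N -> e (a + t) = sg) ->
  wsum e a L.+1 = sg *+ L.
Proof.
move=> ea run; rewrite wsumS ea add0r -(wsum_const _ a.+1).
by apply: eq_big_nat => t ht; rewrite -(subnKC (ltnW (proj1 (andP ht)))) run; lia.
Qed.

Lemma wsum_eq_length e i L : (forall t, e t <= 1) -> wsum e i L = L%:Z ->
  forall t, (i <= t < i + L)%N -> e t = 1.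
Proof.
move=> le1 hL t ht.
have : \sum_(i <= t < i + L) (1 - e t) == 0.
  by rewrite sumrB -/(wsum e i L) hL sumr_const_nat addKn natz subrr.
rewrite psumr_eq0 => [/allP/(_ t)|u _]; last by rewrite subr_ge0.
by rewrite mem_index_iota ht => /(_ isT) /=; rewrite subr_eq0 => /eqP <-.
Qed.

Lemma walk_constant n e : ternary e -> `|wsum e 0 n| = n%:Z ->
  exists2 sg, sg = 1 \/ sg = -1 & forall t, (t < n)%N -> e t = sg.
Proof.
move=> e3; have [sum_ge0 | sum_lt0] := leP 0 (wsum e 0 n).
  rewrite ger0_norm // => hn; exists 1; first by left.
  move=> t ht; apply: (wsum_eq_length (i := 0) (L := n)) => // u.
  by have := ternary_norm_le1 u e3; lia.
rewrite ltr0_norm // => /eqP; rewrite eqr_oppLR => /eqP hn; exists (-1); first by right.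
move=> t ht; apply/eqP; rewrite -eqr_oppLR; apply/eqP.
apply: (wsum_eq_length (e := fun t => - e t) (i := 0) (L := n)) => //.
  by move=> u; have := ternary_norm_le1 u e3; lia.
by rewrite /wsum sumrN -/(wsum e 0 n) hn opprK.
Qed.

End Windows.

Section Walk.
Local Open Scope ring_scope.
Variables n m : nat.
Hypotheses (Hnm : n = (m + m)%N) (Hm : (2 < m)%N).

Let n_gt0 : (0 < n)%N. Proof. lia. Qed.

Definition periodic (e : nat -> int) := forall t, e t = e (t %% n)%N.

Definition latin_walk (e : nat -> int) :=
  (forall i L, (0 < L < n)%N ->
     if odd L then `|wsum e i L| != m%:Z else wsum e i L != 0)
  /\ (wsum e 0 n == 0) || (`|wsum e 0 n| == n%:Z).

Lemma periodic_eq_mod e x y : periodic e -> (x = y %[mod n])%N -> e x = e y.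
Proof. by move=> e_per exy; rewrite e_per exy -e_per. Qed.

Lemma wsum_periodic e a : periodic e -> wsum e a n = wsum e 0 n.
Proof.
move=> e_per; elim: a => // a IH; rewrite -IH.
have ea : e (a + n)%N = e a by apply: periodic_eq_mod; rewrite // modnDr.
have := wsumD e a n 1; rewrite wsum1 ea addn1 wsumS => h.
by apply: (addrI (e a)); rewrite h addrC.
Qed.

Definition patf t : int :=
  if (t < m - 1)%N then 1 else if t == (m - 1)%N then 0 else if (t < n - 1)%N then -1 else 0.

Lemma opp_patf t : (t < n)%N -> - patf t = patf ((t + m) %% n).
Proof.
move=> ht; case: (ltnP (t + m) n) => htm.
  by rewrite modn_small // /patf; do ![case: ifP => ?]; lia.
by rewrite modn_wrap /patf; [do ![case: ifP => ?] | ]; lia.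
Qed.

Section Classification.
Variable e : nat -> int.
Hypotheses (e_tern : ternary e) (e_per : periodic e) (e_latin : latin_walk e).
Hypothesis e_sum0 : wsum e 0 n = 0.

Lemma wsum_even_neq0 i L : (0 < L < n)%N -> ~~ odd L -> wsum e i L != 0.
Proof. by move=> hL hev; have [/(_ i L hL)] := e_latin; rewrite (negbTE hev). Qed.

Lemma adj_sum_neq0 i : e i + e i.+1 != 0.
Proof. by have := @wsum_even_neq0 i 2; rewrite wsumS wsum1; apply => //; lia. Qed.

Lemma adj_nonzero_eq i : e i != 0 -> e i.+1 != 0 -> e i.+1 = e i.
Proof.
by have := adj_sum_neq0 i; case: (e_tern i) => [|[]] ->; case: (e_tern i.+1) => [|[]] ->.
Qed.

Definition mass := wsum (fun t => `|e t|) 0 n.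

Lemma mass_periodic a : mass = wsum (fun t => `|e t|) a n.
Proof. by rewrite /mass wsum_periodic // => t; rewrite -e_per. Qed.

Lemma normr_wsum_le_mass a L : (a + L <= n)%N -> 2%:Z * `|wsum e a L| <= mass.
Proof.
move=> haL; move: e_sum0; rewrite /mass.
have -> : n = (a + L + (n - (a + L)))%N by lia.
rewrite !wsumD !add0n.
set A := wsum e 0 a; set B := wsum e a L; set C := wsum e (a + L) _.
set A' := wsum _ 0 a; set B' := wsum _ a L; set C' := wsum _ (a + L) _ => h0.
have hA : `|A| <= A' by apply: ler_norm_sum.
have hB : `|B| <= B' by apply: ler_norm_sum.
have hC : `|C| <= C' by apply: ler_norm_sum.
have hBAC : `|B| <= `|A| + `|C|.
  have -> : B = - (A + C) by lia.
  by rewrite normrN ler_normD.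
lia.
Qed.

Lemma mass_ge : (2 * m.-1)%N%:Z <= mass.
Proof.
(* Pigeonhole on the prefix sums at the even positions 0, 2, ..., 2 (m - 1). *)
pose f (i : 'I_m.-1.+1) := wsum e 0 (2 * i).
have f_diff (i j : 'I_m.-1.+1) : (i <= j)%N -> f j - f i = wsum e (2 * i) (2 * (j - i)).
  move=> hij; rewrite /f (_ : 2 * j = 2 * i + 2 * (j - i))%N; last by lia.
  by rewrite wsumD add0n addrAC subrr add0r.
have f_neq (i j : 'I_m.-1.+1) : (i < j)%N -> f j != f i.
  move=> hij; rewrite -subr_eq0 f_diff; last exact: ltnW.
  by apply: wsum_even_neq0; [have := ltn_ord j; lia | rewrite oddM].
have f_dist (i j : 'I_m.-1.+1) : (i <= j)%N -> 2%:Z * `|f j - f i| <= mass.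
  by move=> hij; rewrite f_diff //; apply: normr_wsum_le_mass; have := ltn_ord j; lia.
apply: (@injective_ord_spread _ f) => [i j fij | i j].
  apply/eqP; case: (ltngtP i j) => [hij | hij | /val_inj -> //].
    by have := f_neq _ _ hij; rewrite fij eqxx.
  by have := f_neq _ _ hij; rewrite fij eqxx.
have := ler_norm (f j - f i); case: (leqP i j) => hij.
  by have := f_dist _ _ hij; lia.
by have := f_dist _ _ (ltnW hij); rewrite distrC; lia.
Qed.

Lemma no_three_zeros a b c : (a < b < c)%N -> (c < a + n)%N ->
  e a = 0 -> e b = 0 -> e c = 0 -> False.
Proof.
move=> /andP [hab hbc] hca ea eb ec.
have := mass_ge; rewrite (mass_periodic a) -[n](addKn a).
rewrite (@wsum_cat _ a a.+1 (a + n)); last by lia.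
rewrite (@wsum_cat _ a.+1 b (a + n)); last by lia.
rewrite (@wsum_cat _ b b.+1 (a + n)); last by lia.
rewrite (@wsum_cat _ b.+1 c (a + n)); last by lia.
rewrite (@wsum_cat _ c c.+1 (a + n)); last by lia.
rewrite !subSnn !wsum1 ea eb ec normr0.
have := wsum_normr_le a.+1 (b - a.+1) e_tern; have := wsum_normr_le b.+1 (c - b.+1) e_tern.
have := wsum_normr_le c.+1 (a + n - c.+1) e_tern.
lia.
Qed.

Lemma exists_zero : exists u, e u = 0.
Proof.
case: (boolP [exists t : 'I_n, e t == 0]) => [/existsP [t /eqP]|]; first by exists t.
rewrite negb_exists => /forallP nz.
have e_const t : (t < n)%N -> e t = e 0.
  elim: t => // t IH ht; rewrite -IH; last exact: ltnW.
  exact: adj_nonzero_eq (nz (Ordinal (ltnW ht))) (nz (Ordinal ht)).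
have : wsum e 0 n = e 0 *+ n.
  by rewrite -(wsum_const _ 0) /wsum; apply: eq_big_nat => t ht; apply: e_const; lia.
by rewrite e_sum0 => /esym/eqP; rewrite mulrn_eq0 (negbTE (nz (Ordinal n_gt0))) orbF; lia.
Qed.

Lemma run_from_zero a : e a = 0 -> exists L sg, [/\ (0 < L < n.-1)%N, sg = 1 \/ sg = -1,
  forall t, (0 < t <= L)%N -> e (a + t) = sg & e (a + L.+1) = 0].
Proof.
move=> ea.
have e1 : e a.+1 != 0 by have := adj_sum_neq0 a; rewrite ea add0r.
have ean : e (a + n)%N = 0 by rewrite -ea; apply: periodic_eq_mod; rewrite // modnDr.
have ex_zero : exists t, (0 < t)%N && (e (a + t) == 0) by exists n; rewrite ean eqxx andbT; lia.
case: (ex_minnP ex_zero) => v /andP [v_gt0 /eqP ev] v_min.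
have v_gt1 : (1 < v)%N.
  by case: v {v_min} v_gt0 ev => [|[|]] //; rewrite addn1 => _ /eqP; rewrite (negbTE e1).
have run t : (0 < t < v)%N -> e (a + t) = e a.+1.
  elim: t => // t IH /andP [_ ht]; case: t IH ht => [|t] IH ht; first by rewrite addn1.
  have nz u : (0 < u < v)%N -> e (a + u) != 0.
    by move=> /andP [u0 uv]; apply: contraTneq uv => eu; rewrite -leqNgt v_min // u0 eu eqxx.
  rewrite -IH; last by lia.
  rewrite addnS; apply: adj_nonzero_eq; rewrite -?addnS nz //; lia.
have v_lt : (v < n)%N.
  have v_le : (v <= n)%N by apply: v_min; rewrite ean eqxx andbT; lia.
  rewrite ltn_neqAle v_le andbT; apply/eqP => vn.
  have := wsum_run ea (L := v.-1) (sg := e a.+1) (fun t ht => run t ltac:(lia)).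
  rewrite prednK; last by lia.
  rewrite vn (wsum_periodic _ e_per) e_sum0 => /esym/eqP.
  by rewrite mulrn_eq0 (negbTE e1) orbF; lia.
exists v.-1, (e a.+1); split.
- by lia.
- by case: (e_tern a.+1) e1 => [->|[]->]; rewrite ?eqxx //; auto.
- by move=> t ht; apply: run; lia.
- by rewrite prednK ?ev //; lia.
Qed.

Lemma zero_runs : exists u sg, (sg = 1 \/ sg = -1) /\
  forall t, (t < n)%N -> e (u + t.+1) = sg * patf t.
Proof.
have [u eu] := exists_zero.
have eun : e (u + n)%N = 0 by rewrite -eu; apply: periodic_eq_mod; rewrite // modnDr.
have [L1 [s1 [hL1 hs1 run1 z1]]] := run_from_zero eu.
have [L2 [s2 [hL2 hs2 run2 z2]]] := run_from_zero z1.
have hL : (L1.+1 + L2.+1 = n)%N.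
  case: (ltngtP (L1.+1 + L2.+1) n) => // h; exfalso.
    by apply: (@no_three_zeros u (u + L1.+1) (u + L1.+1 + L2.+1)) => //; lia.
  have s2_at : e (u + L1.+1 + (n - L1.+1))%N = s2 by apply: run2; lia.
  rewrite -addnA subnKC in s2_at; last by lia.
  by case: hs2; rewrite -s2_at eun.
have hsum : s1 *+ L1 + s2 *+ L2 = 0.
  by rewrite -(wsum_run eu run1) -(wsum_run z1 run2) -wsumD hL wsum_periodic.
have [s2E L1E] : s2 = - s1 /\ L1 = (m - 1)%N.
  by case: hs1 hs2 hsum => -> [] -> hsum; split; lia.
exists u, s1; split => // t ht; rewrite /patf.
case: ltnP => [t_lt | t_ge]; first by rewrite run1 ?mulr1 //; lia.
case: eqP => [t_eq | t_neq]; first by rewrite mulr0 -z1; congr e; lia.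
case: ltnP => [t_lt' | t_ge'].
  have -> : (u + t.+1 = u + L1.+1 + (t.+1 - L1.+1))%N by lia.
  by rewrite run2 ?s2E ?mulrN1 //; lia.
by rewrite mulr0 -eun; congr e; lia.
Qed.

Lemma walk_pattern : exists c, forall i, e i = patf ((i + c) %% n).
Proof.
have [u [sg [hsg he]]] := zero_runs.
pose c := ((n - 1) * u.+1)%N. (* c = - (u + 1) mod n *)
have shift i : e i = sg * patf ((i + c) %% n).
  rewrite -he; last by rewrite ltn_pmod //; lia.
  apply: periodic_eq_mod => //; rewrite -addSnnS modnDmr.
  have -> : (u.+1 + (i + c) = u.+1 * n + i)%N by rewrite /c; nia.
  by rewrite modnMDl.
case: hsg => hsg; [exists c | exists (c + m)%N] => i; rewrite shift hsg ?mul1r //.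
by rewrite mulN1r opp_patf ?modnDml ?addnA // ltn_pmod //; lia.
Qed.

End Classification.

Lemma latin_walk_const sg : sg = 1 \/ sg = -1 -> latin_walk (fun=> sg) <-> ~~ odd m.
Proof.
move=> hsg; split => [[/(_ 0%N m) hwin _] | m_even].
  apply/negP => m_odd; have := hwin ltac:(lia); rewrite m_odd wsum_const.
  by case: hsg => ->; lia.
split => [i L hL | ]; rewrite wsum_const.
  case: ifP => L_odd; apply/negP => /eqP hL_sum; last by case: hsg hL_sum => ->; lia.
  have hLm : L = m by case: hsg hL_sum => ->; lia.
  by rewrite -hLm L_odd in m_even.
by case: hsg => ->; apply/orP; right; apply/eqP; lia.
Qed.

Definition patf_prefix r : int := if (r <= m - 1)%N then r%:Z else (n - 1 - r)%N%:Z.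

Lemma patf_prefix_n : patf_prefix n = 0.
Proof. by rewrite /patf_prefix; case: ifP => ?; lia. Qed.

Lemma wsum_patf r : (r <= n)%N -> wsum patf 0 r = patf_prefix r.
Proof.
elim: r => [|r IH] hr; first by rewrite wsum0.
rewrite -addn1 wsumD wsum1 IH; last by lia.
by rewrite /patf_prefix /patf; do ![case: ifP => ?]; lia.
Qed.

Lemma wsum_patf_mod x : wsum (fun t => patf (t %% n)) 0 x = patf_prefix (x %% n).
Proof.
set g := fun t => patf (t %% n).
have g_per : periodic g by move=> t; rewrite /g modn_mod.
have g_small r : (r <= n)%N -> wsum g 0 r = patf_prefix r.
  move=> hr; rewrite -wsum_patf // /wsum; apply: eq_big_nat => t ht.
  by rewrite /g modn_small //; lia.
rewrite [in LHS](divn_eq x n) addnC; elim: (x %/ n)%N => [|q IH].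
  by rewrite addn0 g_small // ltnW // ltn_pmod //; lia.
by rewrite mulSnr addnA wsumD IH wsum_periodic // g_small // patf_prefix_n addr0.
Qed.

Lemma wsum_patf_shift c i L : wsum (fun t => patf ((t + c) %% n)) i L =
  patf_prefix ((i + c + L) %% n) - patf_prefix ((i + c) %% n).
Proof.
rewrite -!wsum_patf_mod (wsumD _ 0 (i + c)) add0n addrAC subrr add0r.
by rewrite /wsum addnAC big_addn addnK.
Qed.

Lemma patf_prefix_sep a b : (a < n)%N -> (b < n)%N -> a != b ->
  if odd (a + b) then `|patf_prefix a - patf_prefix b| != m%:Z
  else patf_prefix a - patf_prefix b != 0.
Proof.
move=> ha hb /eqP nab; have [k hk] : exists k, (a + b = k.*2 + odd (a + b))%N.
  by exists (a + b)./2; rewrite -{1}(odd_double_half (a + b)) addnC.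
rewrite /patf_prefix; case: (odd (a + b)) hk => hk; do ![case: ifP => ?]; lia.
Qed.

Lemma latin_walk_patf c : latin_walk (fun t => patf ((t + c) %% n)).
Proof.
split => [i L hL | ]; last by rewrite wsum_patf_shift add0n modnDr subrr eqxx.
rewrite wsum_patf_shift.
have n_even : odd n = false by rewrite Hnm addnn odd_double.
have -> : odd L = odd ((i + c + L) %% n + (i + c) %% n).
  by rewrite oddD !odd_mod // oddD addbC addbA addbb.
apply: patf_prefix_sep; rewrite ?ltn_pmod //.
by rewrite -{2}[(i + c)%N]addn0 eqn_modDl mod0n modn_small; lia.
Qed.

Lemma pattern_mkseq : pattern n = mkseq patf n.
Proof.
have n_half : (n %/ 2 = m)%N by lia.
apply: (@eq_from_nth _ 0); first by rewrite size_mkseq /pattern !size_cat !size_nseq /= n_half; lia.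
move=> t; rewrite /pattern n_half -[[:: 0]]/(nseq 1 (0 : int)) !size_cat !size_nseq => ht.
rewrite nth_mkseq; last by lia.
by rewrite !nth_cat !size_nseq !nth_nseq /patf; do ![case: ifP => ?]; lia.
Qed.

Lemma rotr_pattern k : (k <= n)%N ->
  rotr k (pattern n) = mkseq (fun t => patf ((t + (n - k)) %% n)) n.
Proof.
move=> hk; rewrite pattern_mkseq; apply: (@eq_from_nth _ 0).
  by rewrite size_rotr !size_mkseq.
move=> t; rewrite size_rotr size_mkseq => ht.
by rewrite nth_rotr size_mkseq // !nth_mkseq // ltn_pmod //; lia.
Qed.

Lemma rotr_pattern_inj k k' : (0 < k <= n)%N -> (0 < k' <= n)%N ->
  rotr k (pattern n) = rotr k' (pattern n) -> k = k'.
Proof.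
wlog lt_kk' : k k' / (k < k')%N.
  by move=> H hk hk' E; case: (ltngtP k k') => // ?; [apply: H | apply/esym/H].
move=> hk hk' E; exfalso.
have at_i i j j' : (i < n)%N -> ((i + (n - k)) %% n = j)%N -> ((i + (n - k')) %% n = j')%N ->
    patf j = patf j'.
  by move=> hi <- <-; have := congr1 (nth 0 ^~ i) E; rewrite !rotr_pattern ?nth_mkseq //; lia.
have kk' : (k' - k = m)%N.
  have : patf (k' - k - 1) = patf (n - 1).
    by apply: (at_i (k' - 1)%N); [lia | rewrite modn_wrap; lia | rewrite modn_small; lia].
  by rewrite /patf; do ![case: ifP => ?]; lia.
have : patf (m - 2) = patf (n - 2).
  by apply: (at_i (k' - 2)%N); [lia | rewrite modn_wrap; lia | rewrite modn_small; lia].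
by rewrite /patf; do ![case: ifP => ?]; lia.
Qed.

Lemma eq_latin_walk e e' : e =1 e' -> latin_walk e -> latin_walk e'.
Proof.
move=> ee' [hw ht]; have E i L : wsum e i L = wsum e' i L by apply: eq_bigr.
by split => [i L hL|]; rewrite -!E //; apply: hw.
Qed.

Lemma latin_steps_walk (h : nat -> nat) e : ternary e ->
  (forall t, e t = (h t)%:Z - m%:Z) -> latin_steps n h <-> latin_walk e.
Proof.
move=> e3 he.
have hsum i L : (\sum_(i <= t < i + L) h t)%N%:Z = (L * m)%N%:Z + wsum e i L.
  have sumZ : (\sum_(i <= t < i + L) h t)%N%:Z = \sum_(i <= t < i + L) (h t)%:Z.
    by rewrite -natz natr_sum; apply: eq_bigr => t _; rewrite natz.
  rewrite /wsum (eq_bigr _ (fun t _ => he t)) sumrB sumr_const_nat addKn sumZ.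
  by rewrite -natz natrM mulr_natl natz addrCA subrr addr0.
have win i L : (0 < L < n)%N -> ((\sum_(i <= t < i + L) h t) %% n != 0)%N =
    (if odd L then `|wsum e i L| != m%:Z else wsum e i L != 0).
  move=> hL; rewrite (window_modn_eq0 Hnm hL (hsum i L) (normr_wsum_le i L e3)).
  by case: (odd L).
have tot : ((\sum_(0 <= t < n) h t) %% n == 0)%N = (wsum e 0 n == 0) || (`|wsum e 0 n| == n%:Z).
  apply: (@period_modn_eq0 n m) (normr_wsum_le 0 n e3); first by lia.
  by have := hsum 0%N n; rewrite add0n.
split => [[hw ht] | [hw ht]]; split => [i L hL | ].
- by rewrite -win //; apply: hw.
- by rewrite -tot ht.
- by rewrite win //; apply: hw.
- by apply/eqP; rewrite tot.
Qed.

End Walk.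

Section Rows.
Variable n : nat.
Hypothesis n_gt0 : 0 < n.

Lemma resid_succ x y : y <= n -> resid n x.+1 y.+1 = (x + (n - y)) %% n.
Proof. by move=> hy; rewrite /resid; congr (_ %% _); lia. Qed.

Lemma resid_add y d : y <= n -> d < n -> resid n ((y + d) %% n).+1 y.+1 = d.
Proof.
move=> hy hd; rewrite resid_succ // modnDml -addnA (addnC d) addnA subnKC //.
by rewrite modnDl modn_small.
Qed.

Lemma resid_addK x y : x < n -> y < n -> (y + resid n x.+1 y.+1) %% n = x.
Proof.
move=> hx hy; rewrite resid_succ 1?ltnW // modnDmr addnCA subnKC 1?ltnW //.
by rewrite modnDr modn_small.
Qed.

(* 0-based and cyclic: step s t is h_(t+1) for t < n. *)
Definition step (s : seq nat) t := resid n (nth 0 s (t.+1 %% n)) (nth 0 s (t %% n)).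

Lemma hj_step s t : t < n -> hj n s t.+1 = step s t.
Proof.
move=> ht; rewrite /hj /step /sj /csucc (modn_small ht).
case: eqP => [tn | tn] /=; first by rewrite tn modnn.
by rewrite modn_small //; lia.
Qed.

Lemma step_mod s t : step s t = step s (t %% n).
Proof. by rewrite /step modn_mod -addn1 -[((t %% n).+1)%N]addn1 modnDml. Qed.

Lemma ext_diff_rowE s :
  ext_diff_row n s = mkseq (fun t => ((step s t)%:Z - (n %/ 2)%:Z)%R) n.
Proof.
rewrite /ext_diff_row /mkseq -[1]/(1 + 0) iotaDl -map_comp.
by apply/eq_in_map => t; rewrite mem_iota add0n => /andP [_ ht] /=; rewrite add1n hj_step.
Qed.

Definition mkrow (h : nat -> nat) := mkseq (fun j => ((\sum_(0 <= t < j) h t) %% n).+1) n.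

Section LatinRow.
Variable s : seq nat.
Hypothesis s_latin : latin_row n s.

Lemma size_latin : size s = n.
Proof. by rewrite (perm_size s_latin) size_iota. Qed.

Lemma nth_latin j : j < n -> 0 < nth 0 s j <= n.
Proof.
move=> hj; have : nth 0 s j \in iota 1 n by rewrite -(perm_mem s_latin) mem_nth ?size_latin.
by rewrite mem_iota; lia.
Qed.

Let pos t := (nth 0 s (t %% n)).-1.

Lemma pos_lt t : pos t < n.
Proof. by have := nth_latin (ltn_pmod t n_gt0); rewrite /pos; lia. Qed.

Lemma pos_window i L : pos (i + L) = (pos i + \sum_(i <= t < i + L) step s t) %% n.
Proof.
elim: L => [|L IH]; first by rewrite addn0 big_geq // addn0 modn_small // pos_lt.
rewrite addnS big_nat_recr ?leq_addr //= addnA -modnDml -IH.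
have [hx hy] := (nth_latin (ltn_pmod (i + L).+1 n_gt0), nth_latin (ltn_pmod (i + L) n_gt0)).
rewrite /step /pos -(prednK (proj1 (andP hx))) -(prednK (proj1 (andP hy))) resid_addK //; lia.
Qed.

Lemma latin_row_steps : latin_steps n (step s).
Proof.
have s_uniq : uniq s by rewrite (perm_uniq s_latin) iota_uniq.
have pos_inj i j : pos i = pos j -> i %% n = j %% n.
  move=> hij; apply/eqP; rewrite -(nth_uniq 0 _ _ s_uniq) ?size_latin ?ltn_pmod //; apply/eqP.
  have /andP [hi _] := nth_latin (ltn_pmod i n_gt0).
  have /andP [hj _] := nth_latin (ltn_pmod j n_gt0).
  by have := congr1 succn hij; rewrite /pos !prednK.
split => [i L hL | ].
  apply/negP => /eqP h0; have := pos_window i L; rewrite -modnDmr h0 addn0 modn_small ?pos_lt //.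
  move=> /pos_inj /eqP; rewrite -{2}[i]addn0 eqn_modDl mod0n modn_small; lia.
have pos_n : pos n = pos 0 by rewrite /pos modnn mod0n.
have := pos_window 0 n; rewrite add0n pos_n -{1}(modn_small (pos_lt 0)) -{1}[pos 0]addn0.
by move=> /eqP; rewrite eqn_modDl mod0n eq_sym => /eqP.
Qed.

Lemma mkrow_step : sj s 1 = 1 -> s = mkrow (step s).
Proof.
move=> s1; apply: (@eq_from_nth _ 0); first by rewrite size_latin size_mkseq.
move=> j; rewrite size_latin => hj; rewrite nth_mkseq //.
have := pos_window 0 j; rewrite /pos !add0n mod0n modn_small //.
move: s1; rewrite /sj /= => -> /=; rewrite add0n.
by have := nth_latin hj; lia.
Qed.

End LatinRow.

Lemma latin_mkrow h : latin_steps n h -> latin_row n (mkrow h).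
Proof.
move=> [h_win _].
have P_neq j k : j < k < n -> (\sum_(0 <= t < j) h t) %% n != (\sum_(0 <= t < k) h t) %% n.
  move=> /andP [hjk hk].
  have -> : \sum_(0 <= t < k) h t = \sum_(0 <= t < j) h t + \sum_(j <= t < j + (k - j)) h t.
    by rewrite subnKC ?(ltnW hjk) // -big_cat_nat // ltnW.
  by rewrite -{1}[\sum_(0 <= t < j) h t]addn0 eqn_modDl mod0n eq_sym h_win //; lia.
have row_uniq : uniq (mkrow h).
  apply/mkseq_uniqP => j k; rewrite !inE => hj hk [] /eqP; apply: contraTeq.
  by case: (ltngtP j k) => // hjk _; [apply: P_neq | rewrite eq_sym; apply: P_neq]; lia.
have row_sub : {subset mkrow h <= iota 1 n}.
  by move=> _ /mapP [j _ ->]; rewrite mem_iota ltn0Sn add1n ltnS ltn_pmod.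
have row_size : size (iota 1 n) <= size (mkrow h) by rewrite size_iota size_mkseq.
have [_ row_mem] := uniq_min_size row_uniq row_sub row_size.
exact: uniq_perm row_uniq (iota_uniq 1 n) row_mem.
Qed.

Lemma sj_mkrow1 h : sj (mkrow h) 1 = 1.
Proof. by rewrite /sj nth_mkseq // big_geq // mod0n. Qed.

Lemma step_mkrow h t : latin_steps n h -> (forall u, u < n -> h u < n) -> t < n ->
  step (mkrow h) t = h t.
Proof.
move=> [_ h_tot] h_lt ht.
rewrite /step !nth_mkseq ?ltn_pmod // (modn_small ht).
have -> : (\sum_(0 <= u < t.+1 %% n) h u) %% n = ((\sum_(0 <= u < t) h u) %% n + h t) %% n.
  rewrite modnDml -big_nat_recr //=.
  case: (ltnP t.+1 n) => [lt | ge]; first by rewrite (modn_small lt).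
  have tn : t.+1 = n by lia.
  by rewrite tn modnn big_geq // mod0n h_tot.
by rewrite resid_add ?h_lt // ltnW // ltn_pmod.
Qed.

Lemma eq_mkrow h h' : (forall t, t < n -> h t = h' t) -> mkrow h = mkrow h'.
Proof.
move=> hh'; apply/eq_in_map => j; rewrite mem_iota => /andP [_ hj].
by congr ((_ %% _).+1); apply: eq_big_nat => t ht; apply: hh'; lia.
Qed.

Lemma resid_formula a b : 0 < a <= n -> 0 < b <= n ->
  resid n a b = if b <= a then a - b else a + n - b.
Proof.
move=> ha hb; rewrite /resid; case: ifP => hba; last by rewrite modn_small; lia.
by rewrite modn_wrap; lia.
Qed.

Lemma leq_dist_resid m a b : n = m + m -> 0 < a <= n -> 0 < b <= n ->
  (m - 1 <= dist n a b) = (m - 1 <= resid n b a <= m + 1).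
Proof.
move=> hnm ha hb; rewrite /dist !resid_formula //.
by apply/idP/idP; do ![case: ifP => ?]; lia.
Qed.

Lemma far_rowE m s : n = m + m -> latin_row n s ->
  far_row n s = [forall t : 'I_n, m - 1 <= step s t <= m + 1].
Proof.
move=> hnm s_latin; apply: eq_forallb => t; rewrite -hj_step // /hj.
have -> : n %/ 2 - 1 = m - 1 by lia.
have ht := ltn_ord t.
have csucc_lt : (csucc n t.+1).-1 < n by rewrite /csucc; case: eqP => tn /=; lia.
by rewrite leq_dist_resid // /sj nth_latin.
Qed.

End Rows.

Section Count.
Variable n : nat.
Hypotheses (n_ge6 : (6 <= n)%N) (n_even : ~~ odd n).

Local Notation m := (n %/ 2)%N.

Let Hnm : n = (m + m)%N. Proof. lia. Qed.
Let Hm : (2 < m)%N. Proof. lia. Qed.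
Let n_gt0 : (0 < n)%N. Proof. lia. Qed.

Definition signed_step s t : int := ((step n s t)%:Z - m%:Z)%R.

Lemma signed_step_walk s : latin_row n s -> far_row n s ->
  [/\ ternary (signed_step s), periodic n (signed_step s) & latin_walk n m (signed_step s)].
Proof.
move=> s_latin; rewrite (far_rowE n_gt0 Hnm s_latin) => /forallP s_far.
have bounds t : (m - 1 <= step n s t <= m + 1)%N.
  by rewrite step_mod; apply: (s_far (Ordinal (ltn_pmod t n_gt0))).
have s3 : ternary (signed_step s) by move=> t; have := bounds t; rewrite /signed_step; lia.
split => //; first by move=> t; rewrite /signed_step -step_mod.
by apply/(latin_steps_walk Hnm Hm s3 (fun t => erefl)); apply: latin_row_steps.
Qed.

Lemma walk_row e : ternary e -> latin_walk n m e ->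
  exists s, [&& latin_row n s, far_row n s & sj s 1 == 1%N] /\ ext_diff_row n s = mkseq e n.
Proof.
move=> e3 e_latin; pose h t := absz (e t + m%:Z)%R.
have he t : e t = ((h t)%:Z - m%:Z)%R by rewrite /h gez0_abs; [lia | case: (e3 t) => [|[]] ->; lia].
have h_bounds t : (m - 1 <= h t <= m + 1)%N by have := he t; case: (e3 t) => [|[]] ->; lia.
have h_latin : latin_steps n h by apply/(latin_steps_walk Hnm Hm e3 he).
have h_lt t : (t < n)%N -> (h t < n)%N by have := h_bounds t; lia.
exists (mkrow n h); have r_latin := latin_mkrow n_gt0 h_latin.
rewrite r_latin (far_rowE n_gt0 Hnm r_latin) (sj_mkrow1 n_gt0) eqxx andbT; split.
  by apply/forallP => t; rewrite step_mkrow.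
rewrite (ext_diff_rowE n_gt0); apply: eq_in_mkseq => t ht.
by rewrite step_mkrow // he.
Qed.

Lemma ext_diff_row_inj s1 s2 : latin_row n s1 -> latin_row n s2 ->
  sj s1 1 = 1%N -> sj s2 1 = 1%N -> ext_diff_row n s1 = ext_diff_row n s2 -> s1 = s2.
Proof.
move=> l1 l2 o1 o2 E; rewrite (mkrow_step n_gt0 l1 o1) (mkrow_step n_gt0 l2 o2).
apply: (eq_mkrow n_gt0) => t ht; have := congr1 (nth 0%R ^~ t) E.
by rewrite !(ext_diff_rowE n_gt0) !nth_mkseq //; lia.
Qed.

Lemma size_pattern : size (pattern n) = n.
Proof. by rewrite (pattern_mkseq Hnm Hm) size_mkseq. Qed.

Definition diff_rows : seq (seq int) :=
  [seq rotr k (pattern n) | k <- iota 1 n] ++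
  (if odd m then [::] else [:: nseq n 1%R; nseq n (-1)%R]).

Lemma ext_diff_row_mem s : latin_row n s -> far_row n s -> ext_diff_row n s \in diff_rows.
Proof.
move=> s_latin s_far; have [e3 e_per e_latin] := signed_step_walk s_latin s_far.
rewrite (ext_diff_rowE n_gt0) -/(signed_step s) mem_cat.
case: (e_latin) => _ /orP [/eqP sum0 | /eqP sum_n].
  have [c hc] := walk_pattern Hnm Hm e3 e_per e_latin sum0.
  apply/orP; left; apply/mapP; exists (n - c %% n)%N.
    by rewrite mem_iota; have := ltn_pmod c n_gt0; lia.
  rewrite (rotr_pattern Hnm Hm) ?leq_subr // subKn; last exact: ltnW (ltn_pmod c n_gt0).
  by apply: eq_in_mkseq => t _; rewrite hc modnDmr.
have [sg hsg sg_e] := walk_constant e3 sum_n.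
have e_sg : signed_step s =1 fun=> sg by move=> t; rewrite e_per sg_e // ltn_pmod.
have m_even : ~~ odd m by apply/(latin_walk_const Hnm Hm hsg)/(eq_latin_walk e_sg).
apply/orP; right; rewrite (negbTE m_even) (eq_mkseq e_sg) mkseq_const !inE.
by case: hsg => ->; rewrite eqxx ?orbT.
Qed.

Lemma ext_diff_row_onto d : d \in diff_rows ->
  exists s, [&& latin_row n s, far_row n s & sj s 1 == 1%N] /\ ext_diff_row n s = d.
Proof.
rewrite mem_cat => /orP [/mapP [k hk ->] | ].
  rewrite (rotr_pattern Hnm Hm); last by move: hk; rewrite mem_iota; lia.
  apply: walk_row; last exact: latin_walk_patf.
  by move=> t; rewrite /patf; do ![case: ifP => _]; auto.
case: ifP => // m_odd.
have const_row sg : sg = 1%R \/ sg = (-1)%R ->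
    exists s, [&& latin_row n s, far_row n s & sj s 1 == 1%N] /\ ext_diff_row n s = nseq n sg.
  move=> hsg; rewrite -mkseq_const; apply: walk_row; first by move=> t; case: hsg; auto.
  by apply/(latin_walk_const Hnm Hm hsg); rewrite m_odd.
by rewrite !inE => /orP [] /eqP ->; apply: const_row; auto.
Qed.

Lemma uniq_diff_rows : uniq diff_rows.
Proof.
rewrite cat_uniq; apply/and3P; split.
- rewrite map_inj_in_uniq ?iota_uniq // => k k'; rewrite !mem_iota => hk hk'.
  by apply: (rotr_pattern_inj Hnm Hm); lia.
- have zero_in k : 0%R \in rotr k (pattern n).
    by rewrite mem_rotr /pattern mem_cat /= in_cons eqxx orbT.
  case: ifP => // _; apply/hasPn => d; rewrite !inE => /orP [] /eqP ->;
  by apply/mapP => -[k _ E]; move: (zero_in k); rewrite -E mem_nseq => /andP [_ /eqP].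
- case: ifP => //= _; rewrite inE andbT; apply/eqP => E.
  by have := congr1 (nth 0%R ^~ 0) E; rewrite !nth_nseq n_gt0.
Qed.

Lemma size_diff_rows : size diff_rows = if (n %% 4 == 0)%N then (n + 2)%N else n.
Proof.
rewrite size_cat size_map size_iota.
have [k hk] : exists k, m = (k.*2 + odd m)%N by exists m./2; rewrite -{1}(odd_double_half m) addnC.
case: (odd m) hk => hk /=.
  by rewrite ifF ?addn0 //; apply/negbTE/eqP; lia.
by rewrite ifT //; apply/eqP; lia.
Qed.

End Count.

Theorem mainTheorem4 (n : nat) : (6 <= n)%N -> ~~ odd n ->
  (forall s : seq nat, latin_row n s -> far_row n s ->
     is_rotation_of (ext_diff_row n s) (pattern n)
     \/ ext_diff_row n s = nseq n 1%R
     \/ ext_diff_row n s = nseq n (-1)%R)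
  /\
  size [seq s <- permutations (iota 1 n) | far_row n s && (sj s 1 == 1%N)]
    = (if n %% 4 == 0 then n + 2 else n)%N.
Proof.
move=> n_ge6 n_even; split => [s s_latin s_far | ].
  have := ext_diff_row_mem n_ge6 n_even s_latin s_far.
  rewrite mem_cat => /orP [/mapP [k hk ->] | ].
    left; exists k; split => //.
    by rewrite (size_pattern n_ge6 n_even); move: hk; rewrite mem_iota; lia.
  by case: ifP => // _; rewrite !inE => /orP [] /eqP ->; right; [left | right].
rewrite -(size_diff_rows n_ge6 n_even) -(size_map (ext_diff_row n)).
apply/perm_size/uniq_perm.
- rewrite map_inj_in_uniq ?filter_uniq ?permutations_uniq // => s1 s2.
  rewrite !mem_filter !mem_permutations.
  move=> /andP [/andP [_ /eqP o1] l1] /andP [/andP [_ /eqP o2] l2].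
  exact: ext_diff_row_inj.
- exact: uniq_diff_rows.
- move=> d; apply/mapP/idP.
    case=> s; rewrite mem_filter mem_permutations => /andP [/andP [f _] l] ->.
    exact: ext_diff_row_mem.
  case/(ext_diff_row_onto n_ge6 n_even) => s [hs <-]; exists s => //.
  by rewrite mem_filter mem_permutations; case/and3P: hs => l -> ->.
Qed.
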